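(* Let $\mathbf{F}$ be a three-dimensional Euclidean space with inner product $\langle\cdot,\cdot\rangle$, let $Z\in\mathbf{F}$ be a unit vector and $R>0$. Let $B$ be the sphere of radius $R$ centered at the origin, and $\mathbf{E}=\{q\in\mathbf{F}:\langle Z,q\rangle=R\}$ the plane tangent to $B$ at $O=RZ$. For $q\in B$ put $h=\langle Z,q\rangle/R$, $Z_B=Z-\frac{h}{R}q$, and $b(q)=R^{-2}(1-h^2)^{-3/2}$. Consider a particle of unit mass moving on $B$, in the open hemisphere $\{h>0\}$ minus the point $O$, according to the spherical Kepler problem, i.e. $\ddot q=b(q)\,Z_B+\lambda q$ with $\lambda$ the scalar (depending on $q,\dot q$, possibly $t$) that keeps $q$ on $B$. Its energy is $$\mathcal{E}=\tfrac12\|\dot q\|^2+U(q),\qquad U(q)=-\frac{h}{R\sqrt{1-h^2}}.$$ Let $q_{\mathbf{E}}=q/h\in\mathbf{E}$ be the central projection, $Q=q_{\mathbf{E}}-RZ$, and $\tau$ the time defined by $d\tau=h^{-2}\,dt$. Then $Q$ satisfies $\frac{d^2Q}{d\tau^2}=-\|Q\|^{-3}Q$; suppose that its orbit is an ellipse with semi-major axis $a$ and eccentricity $e$. Then $$\mathcal{E}=-\frac{1}{2a}+\frac{a(1-e^2)}{2R^2}.$$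
   Context: Dots denote derivatives with respect to the original time $t$. The Kepler problem in the plane $\mathbf{E}$ (with attracting center $O$ and unit masses) has energy $E=\frac12\|dQ/d\tau\|^2-\frac1{\|Q\|}$; for an elliptic orbit with semi-major axis $a$ and eccentricity $e$ one has $E=-\frac1{2a}$ and squared angular momentum $\|Q\times dQ/d\tau\|^2=a(1-e^2)$. *)

(* The 3-dimensional Euclidean space F is modelled as 'rV[R]_3 with the
   standard inner product (every 3-d Euclidean space is isometric to it). *)
From HB Require Import structures.
From mathcomp Require Import all_boot all_order all_algebra.
From mathcomp Require Import all_classical all_reals all_analysis.
Set Implicit Arguments. Unset Strict Implicit. Unset Printing Implicit Defensive.
Import Order.TTheory GRing.Theory Num.Theory.
Import numFieldNormedType.Exports.
Local Open Scope classical_set_scope.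
Local Open Scope ring_scope.

Section Kepler.
Variable R : realType.

Definition dot (u v : 'rV[R]_3) : R := \sum_(i < 3) u 0 i * v 0 i.
Definition enorm (u : 'rV[R]_3) : R := Num.sqrt (dot u u).

Definition hgt (Rad : R) (Z q : 'rV[R]_3) : R := dot Z q / Rad.
Definition ZB (Rad : R) (Z q : 'rV[R]_3) : 'rV[R]_3 :=
  Z - (hgt Rad Z q / Rad) *: q.
Definition bfun (Rad : R) (Z q : 'rV[R]_3) : R :=
  (Rad ^+ 2 * Num.sqrt (1 - hgt Rad Z q ^+ 2) ^+ 3)^-1.
Definition Upot (Rad : R) (Z q : 'rV[R]_3) : R :=
  - (hgt Rad Z q / (Rad * Num.sqrt (1 - hgt Rad Z q ^+ 2))).
Definition energy (Rad : R) (Z q qdot : 'rV[R]_3) : R :=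
  2^-1 * dot qdot qdot + Upot Rad Z q.
Definition Qproj (Rad : R) (Z q : 'rV[R]_3) : 'rV[R]_3 :=
  (hgt Rad Z q)^-1 *: q - Rad *: Z.

(* An ellipse with semi-major axis a and eccentricity e (0 <= e < 1), lying
   in the plane through the origin orthogonal to Z (the plane E translated
   by -RZ, where Q lives): foci F1, F2 in that plane at distance 2ae. *)
Definition is_ellipse_in_plane (Z : 'rV[R]_3) (S : set 'rV[R]_3) (a e : R) :=
  0 < a /\ 0 <= e < 1 /\
  exists F1 F2 : 'rV[R]_3,
    dot Z F1 = 0 /\ dot Z F2 = 0 /\ enorm (F1 - F2) = 2 * a * e /\
    S = [set x | dot Z x = 0 /\ enorm (x - F1) + enorm (x - F2) = 2 * a].
End Kepler.

(* The central projection Q of the spherical motion, run in the time tau, is a planar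
   Kepler motion: with V = dQ/dtau one has dQ/dt = h^-2 V and dV/dt = -h^-2 Q/|Q|^3,
   and inverting the time change turns this into Kepler's equation in tau.  Along a
   Kepler motion the squared angular momentum G and the Runge-Lenz vector A are
   conserved, and |Q| = G - <A, Q>.  Evaluating this focal equation at five points of
   the given ellipse forces G = a (1 - e^2) and |A| = e, so the Kepler energy
   (|A|^2 - 1) / (2 G) equals -1/(2a); the spherical energy is the Kepler energy plus
   G / (2 R^2). *)

From HB Require Import structures.
From mathcomp Require Import all_boot all_order all_algebra.
From mathcomp Require Import all_classical all_reals all_analysis.
From mathcomp Require Import ring lra.
Import Order.TTheory GRing.Theory Num.Theory.
Import numFieldNormedType.Exports.
Local Open Scope classical_set_scope.
Local Open Scope ring_scope.
Set Implicit Arguments. Unset Strict Implicit. Unset Printing Implicit Defensive.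

Section Dot.
Variable R : realType.
Implicit Types u v w : 'rV[R]_3.

Local Notation i0 := (@Ordinal 3 0 isT).
Local Notation i1 := (@Ordinal 3 1 isT).
Local Notation i2 := (@Ordinal 3 2 isT).

Lemma dotE u v : dot u v = u 0 i0 * v 0 i0 + u 0 i1 * v 0 i1 + u 0 i2 * v 0 i2.
Proof.
rewrite /dot !big_ord_recr big_ord0 /= add0r.
by congr (_ * _ + _ * _ + _ * _); congr (_ _ _); apply: val_inj.
Qed.

Lemma dotC u v : dot u v = dot v u.
Proof. by rewrite !dotE; ring. Qed.

Lemma dotDl u v w : dot (u + v) w = dot u w + dot v w.
Proof. by rewrite !dotE !mxE; ring. Qed.

Lemma dotDr u v w : dot u (v + w) = dot u v + dot u w.
Proof. by rewrite !dotE !mxE; ring. Qed.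

Lemma dot0l u : dot 0 u = 0.
Proof. by rewrite dotE !mxE; ring. Qed.

Lemma dotNr u v : dot u (- v) = - dot u v.
Proof. by rewrite !dotE !mxE; ring. Qed.

Lemma dotBl u v w : dot (u - v) w = dot u w - dot v w.
Proof. by rewrite !dotE !mxE; ring. Qed.

Lemma dotBr u v w : dot u (v - w) = dot u v - dot u w.
Proof. by rewrite !dotE !mxE; ring. Qed.

Lemma dotZl (k : R) u v : dot (k *: u) v = k * dot u v.
Proof. by rewrite !dotE !mxE; ring. Qed.

Lemma dotZr (k : R) u v : dot u (k *: v) = k * dot u v.
Proof. by rewrite !dotE !mxE; ring. Qed.

Lemma dot_ge0 u : 0 <= dot u u.
Proof. by rewrite /dot sumr_ge0 // => i _; rewrite -expr2 sqr_ge0. Qed.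

Lemma dot_eq0 u : (dot u u == 0) = (u == 0).
Proof.
apply/eqP/eqP => [uu0|->]; last by rewrite /dot big1 // => i _; rewrite mxE mul0r.
apply/rowP => j; rewrite mxE; apply/eqP; rewrite -sqrf_eq0 expr2; apply/eqP.
by apply: (psumr_eq0P _ uu0) => // i _; rewrite -expr2 sqr_ge0.
Qed.

Lemma dot_gt0 u : (0 < dot u u) = (u != 0).
Proof. by rewrite lt_neqAle dot_ge0 andbT eq_sym dot_eq0. Qed.

Lemma enorm_sqr u : enorm u ^+ 2 = dot u u.
Proof. by rewrite sqr_sqrtr // dot_ge0. Qed.

Lemma enorm_gt0 u : (0 < enorm u) = (u != 0).
Proof. by rewrite sqrtr_gt0 dot_gt0. Qed.

Definition cross u v : 'rV[R]_3 := \row_j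
  [:: u 0 i1 * v 0 i2 - u 0 i2 * v 0 i1;
      u 0 i2 * v 0 i0 - u 0 i0 * v 0 i2;
      u 0 i0 * v 0 i1 - u 0 i1 * v 0 i0]`_j.

Lemma dot_crossl u v : dot u (cross u v) = 0.
Proof. by rewrite dotE !mxE /=; ring. Qed.

Lemma dot_crossr u v : dot v (cross u v) = 0.
Proof. by rewrite dotE !mxE /=; ring. Qed.

Lemma dot_cross u v : dot (cross u v) (cross u v) = dot u u * dot v v - dot u v ^+ 2.
Proof. by rewrite !dotE !mxE /=; ring. Qed.

Lemma dot_plane Z u y1 y2 :
  dot Z Z = 1 -> dot u u = 1 -> dot Z u = 0 -> dot Z y1 = 0 -> dot Z y2 = 0 ->
  dot y1 y2 = dot y1 u * dot y2 u + dot y1 (cross Z u) * dot y2 (cross Z u).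
Proof.
move=> ZZ uu Zu Zy1 Zy2.
have gram : dot (cross Z u) y1 * dot (cross Z u) y2 =
  dot Z Z * (dot u u * dot y1 y2 - dot u y2 * dot y1 u)
  - dot Z u * (dot u Z * dot y1 y2 - dot u y2 * dot y1 Z)
  + dot Z y2 * (dot u Z * dot y1 u - dot u u * dot y1 Z).
  by rewrite !dotE !mxE /=; ring.
rewrite ![dot y1 (cross _ _)]dotC ![dot y2 (cross _ _)]dotC gram ZZ uu Zu Zy2.
by rewrite (dotC u y2); ring.
Qed.
End Dot.

Section Derivatives.
Variable R : realType.

Lemma is_derive_rowP n (F : R -> 'rV[R]_n) (t : R) (D : 'rV[R]_n) :
  is_derive t 1 F D <-> forall j, is_derive t 1 (fun x => F x 0 j) (D 0 j).
Proof.
split=> [[dF <-] j | dFj].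
  apply: DeriveDef; first by move/derivable_mxP : dF.
  by rewrite derive_mx // mxE.
have dF : derivable F t 1.
  by apply/derivable_mxP => i j; rewrite (ord1 i); case: (dFj j).
apply: DeriveDef => //; rewrite derive_mx //; apply/rowP => j.
by rewrite mxE; apply: derive_val.
Qed.

Lemma is_derive_row_cst n (F : R -> 'rV[R]_n) (s t : R) :
  (forall x : R, is_derive x 1 F 0) -> F s = F t.
Proof.
move=> dF0; apply/rowP => j; apply: (@is_derive_0_is_cst _ (fun x => F x 0 j)) => x.
by have /is_derive_rowP/(_ j) := dF0 x; rewrite mxE.
Qed.

Section Rules.
Variables (W : normedModType R) (t : R).

Lemma is_derive_sub (f g : R -> W) (df dg : W) : is_derive t 1 f df -> is_derive t 1 g dg ->
  is_derive t 1 (fun x => f x - g x) (df - dg).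
Proof. exact: is_deriveB. Qed.

Lemma is_derive_comp (F : R -> W) (g : R -> R) (dF : W) (dg : R) :
  is_derive (g t) 1 F dF -> is_derive t 1 g dg -> is_derive t 1 (F \o g) (dg *: dF).
Proof.
move=> [/[dup] /derivable1_diffP diffF derF <-] [/[dup] /derivable1_diffP diffg derg <-].
have dFog : differentiable (F \o g) t by apply: differentiable_comp.
apply: DeriveDef; first exact/derivable1_diffP.
rewrite -derive1E derive1E' // diff_comp //= -derive1E'// diff1E //.
by rewrite !derive1E.
Qed.
End Rules.

Lemma is_derive_mul (f g : R -> R) (t df dg : R) : is_derive t 1 f df -> is_derive t 1 g dg ->
  is_derive t 1 (fun x => f x * g x) (f t * dg + g t * df).
Proof. exact: is_deriveM. Qed.

Lemma is_derive_sqr (f : R -> R) (t df : R) : is_derive t 1 f df ->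
  is_derive t 1 (fun x => f x ^+ 2) (2 * f t * df).
Proof.
by move=> dft; apply: is_derive_eq (is_derive_mul dft dft) _; ring.
Qed.

Lemma is_derive_inv (f : R -> R) (t df : R) : is_derive t 1 f df -> f t != 0 ->
  is_derive t 1 (fun x => (f x)^-1) (- df / f t ^+ 2).
Proof.
move=> dft ft0; apply: is_derive_eq (is_deriveV ft0 dft) _.
by rewrite -[_ *: _]/(_ * _) mulrC mulrN mulNr.
Qed.

Lemma is_derive_sqrt (f : R -> R) (t df : R) : is_derive t 1 f df -> 0 < f t ->
  is_derive t 1 (fun x => Num.sqrt (f x)) (df / (2 * Num.sqrt (f t))).
Proof.
move=> dft ft0; have := is_derive1_comp (is_derive1_sqrt ft0) dft.
by rewrite mulrC.
Qed.

Lemma is_derive_scale n (f : R -> R) (F : R -> 'rV[R]_n) (t df : R) (dF : 'rV[R]_n) :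
  is_derive t 1 f df -> is_derive t 1 F dF ->
  is_derive t 1 (fun x => f x *: F x) (f t *: dF + df *: F t).
Proof.
move=> dft /is_derive_rowP dFt; apply/is_derive_rowP => j.
have -> : (fun x => (f x *: F x) 0 j) = fun x => f x * F x 0 j.
  by apply/funext => x; rewrite mxE.
by rewrite !mxE [df * _]mulrC; apply: is_derive_mul.
Qed.

Lemma is_derive_dot (F G : R -> 'rV[R]_3) (t : R) (dF dG : 'rV[R]_3) :
  is_derive t 1 F dF -> is_derive t 1 G dG ->
  is_derive t 1 (fun x => dot (F x) (G x)) (dot (F t) dG + dot dF (G t)).
Proof.
move=> /is_derive_rowP dFt /is_derive_rowP dGt.
rewrite /dot -big_split /=.
have -> : (fun x => \sum_(i < 3) F x 0 i * G x 0 i) = \sum_(i < 3) (fun x => F x 0 i * G x 0 i).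
  by apply/funext => x; rewrite fct_sumE.
apply: is_derive_sum => i.
by rewrite [dF 0 i * _]mulrC; apply: is_derive_mul.
Qed.

Lemma is_derive_dotl (y : 'rV[R]_3) (F : R -> 'rV[R]_3) (t : R) (dF : 'rV[R]_3) :
  is_derive t 1 F dF -> is_derive t 1 (fun x => dot y (F x)) (dot y dF).
Proof.
move=> dFt; apply: is_derive_eq (is_derive_dot (is_derive_cst y t 1) dFt) _.
by rewrite dot0l addr0.
Qed.

Section Reparametrization.
Variables (tau k : R -> R).
Hypothesis tau_k : forall t : R, is_derive t 1 tau (k t).
Hypothesis k_gt0 : forall t, 0 < k t.

Lemma gtr0_is_derive_lt : {homo tau : x y / x < y}.
Proof.
move=> x y xy; apply: (@gtr0_derive1_lt_cc _ tau x y) => //.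
- by move=> z _; rewrite derive1E; have [_ ->] := tau_k z.
- apply: continuous_subspaceT => z.
  by apply/differentiable_continuous/derivable1_diffP; case: (tau_k z).
- by rewrite in_itv /= lexx ltW.
- by rewrite in_itv /= lexx ltW.
Qed.

Lemma is_derive_reparam (W : normedModType R) (P F D : R -> W) :
  (forall t, P (tau t) = F t) -> (forall t : R, is_derive t 1 F (k t *: D t)) ->
  forall t, is_derive (tau t) 1 P (D t).
Proof.
move=> PF dF t.
have tau_inj : injective tau := inc_inj (le_mono gtr0_is_derive_lt).
pose g := pinv setT tau.
have tauK : cancel tau g.
  by move=> x; apply: (@pinvKV _ _ _ setT) => // [y z _ _ /tau_inj|]; last exact: in_setT.
have tau_cont : continuous tau.
  by move=> z; apply/differentiable_continuous/derivable1_diffP; case: (tau_k z).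
have gK : {near tau t, cancel g tau}.
  by apply: near_continuous_can_sym; apply: filterE.
have dg : is_derive (tau t) 1 g (k t)^-1.
  by apply: is_derive_inverse => //; [apply: filterE | apply: filterE | rewrite gt_eqF].
apply: (near_eq_is_derive (f := F \o g)).
  by apply: filterS gK => u tauu; rewrite /= -PF tauu.
apply: is_derive_eq; first by apply: is_derive_comp; rewrite tauK.
by rewrite tauK scalerA mulVf ?scale1r // gt_eqF.
Qed.
End Reparametrization.
End Derivatives.

Section KeplerIntegrals.
Variable R : realType.
Implicit Types Q V : 'rV[R]_3.

Definition kepler_accel Q := - (enorm Q ^+ 3)^-1 *: Q.
Definition kepler_energy Q V := 2^-1 * dot V V - (enorm Q)^-1.
(* |Q x V|^2, by Lagrange's identity *)
Definition angmom2 Q V := dot Q Q * dot V V - dot Q V ^+ 2.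
Definition runge_lenz Q V := (dot V V - (enorm Q)^-1) *: Q - dot Q V *: V.

Lemma dot_runge_lenz Q V : Q != 0 ->
  dot (runge_lenz Q V) Q = angmom2 Q V - enorm Q.
Proof.
rewrite -enorm_gt0 => /lt0r_neq0 nQ0.
rewrite /runge_lenz /angmom2 dotBl !dotZl (dotC V) -[dot Q Q]enorm_sqr.
by field.
Qed.

Lemma runge_lenz_norm Q V : Q != 0 ->
  dot (runge_lenz Q V) (runge_lenz Q V) = 1 + 2 * kepler_energy Q V * angmom2 Q V.
Proof.
rewrite -enorm_gt0 => /lt0r_neq0 nQ0.
rewrite /runge_lenz /kepler_energy /angmom2 !(dotBl, dotBr, dotZl, dotZr) (dotC V).
by rewrite -[dot Q Q]enorm_sqr; field.
Qed.

(* Kepler's problem dQ/dtau = V, dV/dtau = -Q/|Q|^3, seen in a time t with dtau/dt = k t. *)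
Variables (Q V : R -> 'rV[R]_3) (k : R -> R).
Hypothesis Q_neq0 : forall t, Q t != 0.
Hypothesis dQ : forall t : R, is_derive t 1 Q (k t *: V t).
Hypothesis dV : forall t : R, is_derive t 1 V (k t *: kepler_accel (Q t)).

Lemma is_derive_enorm_inv (t : R) :
  is_derive t 1 (fun x => (enorm (Q x))^-1) (- k t * dot (Q t) (V t) / enorm (Q t) ^+ 3).
Proof.
have nQ0 : enorm (Q t) != 0 by rewrite gt_eqF // enorm_gt0.
have QQ0 : 0 < dot (Q t) (Q t) by rewrite dot_gt0.
apply: is_derive_eq (is_derive_inv (is_derive_sqrt (is_derive_dot (dQ t) (dQ t)) QQ0) nQ0) _.
rewrite -/(enorm (Q t)) dotZl dotZr (dotC (V t)).
by field.
Qed.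

Lemma angmom2_const s t : angmom2 (Q s) (V s) = angmom2 (Q t) (V t).
Proof.
apply: (@is_derive_0_is_cst _ (fun x => angmom2 (Q x) (V x))) => x.
have nQ0 : enorm (Q x) != 0 by rewrite gt_eqF // enorm_gt0.
apply: is_derive_eq (is_derive_sub
  (is_derive_mul (is_derive_dot (dQ x) (dQ x)) (is_derive_dot (dV x) (dV x)))
  (is_derive_sqr (is_derive_dot (dQ x) (dV x)))) _.
rewrite /kepler_accel !(dotZl, dotZr) (dotC (V x)) -[dot (Q x) (Q x)]enorm_sqr.
by field.
Qed.

Lemma runge_lenz_const s t : runge_lenz (Q s) (V s) = runge_lenz (Q t) (V t).
Proof.
apply: (@is_derive_row_cst _ _ (fun x => runge_lenz (Q x) (V x))) => x.
have nQ0 : enorm (Q x) != 0 by rewrite gt_eqF // enorm_gt0.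
apply: is_derive_eq (is_derive_sub
  (is_derive_scale (is_derive_sub (is_derive_dot (dV x) (dV x)) (is_derive_enorm_inv x)) (dQ x))
  (is_derive_scale (is_derive_dot (dQ x) (dV x)) (dV x))) _.
rewrite /kepler_accel !(dotZl, dotZr) (dotC (V x)) -[dot (Q x) (Q x)]enorm_sqr.
by apply/rowP => j; rewrite !mxE; field.
Qed.
End KeplerIntegrals.

Section Ellipse.
Variable R : realType.

Lemma focal_params (a e L A1 A2 : R) :
  0 < a -> 0 <= e < 1 -> 0 <= L -> A1 * A2 = 0 ->
  L ^+ 2 * (A1 ^+ 2 + A2 ^+ 2) + a ^+ 2 = L ^+ 2 + a ^+ 2 * A1 ^+ 2 ->
  L ^+ 2 * (A1 ^+ 2 + A2 ^+ 2) + a ^+ 2 * (1 - e ^+ 2)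
    = L ^+ 2 + a ^+ 2 * (1 - e ^+ 2) * A2 ^+ 2 ->
  L = a /\ A1 ^+ 2 + A2 ^+ 2 = e ^+ 2.
Proof.
move=> a_gt0 /andP[e_ge0 e_lt1] L_ge0 /eqP; rewrite mulf_eq0 => /orP[]/eqP A0 Ia IIb.
all: have a2_gt0 : 0 < a ^+ 2 by rewrite exprn_gt0.
all: have L2_ge0 : 0 <= L ^+ 2 by rewrite sqr_ge0.
- rewrite A0 expr0n /= add0r mulr0 addr0 in Ia IIb *.
  have A2_lt1 : A2 ^+ 2 < 1 by nra.
  have Lb : L ^+ 2 = a ^+ 2 * (1 - e ^+ 2) by nra.
  have key : (1 - e ^+ 2) * (1 - A2 ^+ 2) = 1.
    by apply: (mulfI (lt0r_neq0 a2_gt0)); rewrite mulrA -Lb; lra.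
  have e0 : e = 0.
    by apply/eqP; rewrite -sqrf_eq0 eq_le sqr_ge0 andbT; nra.
  have A20 : A2 = 0.
    by apply/eqP; rewrite -sqrf_eq0 eq_le sqr_ge0 andbT; nra.
  by rewrite e0 A20; split; [nra | rewrite expr0n].
- rewrite A0 expr0n /= addr0 mulr0 addr0 in Ia IIb *.
  have b2_gt0 : 0 < a ^+ 2 * (1 - e ^+ 2) by rewrite mulr_gt0 // subr_gt0; nra.
  have A1_lt1 : A1 ^+ 2 < 1 by nra.
  have La : L ^+ 2 = a ^+ 2.
    have : (L ^+ 2 - a ^+ 2) * (1 - A1 ^+ 2) = 0 by lra.
    by move/eqP; rewrite mulf_eq0 subr_eq0 [1 - _ == 0]gt_eqF ?subr_gt0 // orbF => /eqP.
  split; first nra.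
  apply: (mulfI (lt0r_neq0 a2_gt0)); lra.
Qed.

(* The ellipse in coordinates centred at its centre and aligned with its axes; it
   suffices to evaluate the focal equation at the four vertices and at (3a/5, 4b/5). *)
Lemma ellipse_focal_coeffs (a e c1 c2 A1 A2 G : R) :
  0 < a -> 0 <= e < 1 ->
  (forall al be, -a <= al -> al <= a -> be ^+ 2 = (1 - e ^+ 2) * (a ^+ 2 - al ^+ 2) ->
     Num.sqrt ((c1 + al) ^+ 2 + (c2 + be) ^+ 2) = G - A1 * (c1 + al) - A2 * (c2 + be)) ->
  G = a * (1 - e ^+ 2) /\ A1 ^+ 2 + A2 ^+ 2 = e ^+ 2.
Proof.
move=> a_gt0 e01 focal; have /andP[e_ge0 e_lt1] := e01.
pose b := a * Num.sqrt (1 - e ^+ 2).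
have b_gt0 : 0 < b by rewrite mulr_gt0 // sqrtr_gt0 subr_gt0; nra.
have b2 : b ^+ 2 = a ^+ 2 * (1 - e ^+ 2) by rewrite exprMn sqr_sqrtr // subr_ge0; nra.
have pt al be : -a <= al -> al <= a -> be ^+ 2 = (1 - e ^+ 2) * (a ^+ 2 - al ^+ 2) ->
    0 <= G - A1 * (c1 + al) - A2 * (c2 + be) /\
    (c1 + al) ^+ 2 + (c2 + be) ^+ 2 = (G - A1 * (c1 + al) - A2 * (c2 + be)) ^+ 2.
  move=> /focal /[apply] /[apply] <-; rewrite sqrtr_ge0 sqr_sqrtr //.
  by rewrite addr_ge0 // sqr_ge0.
have [|||P1 E1] := pt a 0 _ _ _; [lra | lra | ring |].
have [|||P2 E2] := pt (- a) 0 _ _ _; [lra | lra | ring |].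
have [|||_ E3] := pt 0 b _ _ _; [lra | lra | rewrite b2; ring |].
have [|||_ E4] := pt 0 (- b) _ _ _; [lra | lra | rewrite sqrrN b2; ring |].
have [|||_ E5] := pt (3 / 5 * a) (4 / 5 * b) _ _ _; [lra | lra | by rewrite exprMn b2; field |].
pose L := G - A1 * c1 - A2 * c2.
have GE : G = L + A1 * c1 + A2 * c2 by rewrite /L; ring.
rewrite GE in P1 P2 E1 E2 E3 E4 E5.
have c1E : c1 = - L * A1 by apply: (mulfI (lt0r_neq0 a_gt0)); lra.
have c2E : c2 = - L * A2 by apply: (mulfI (lt0r_neq0 b_gt0)); lra.
rewrite c1E c2E in E1 E3 E5.
have A12 : A1 * A2 = 0.
  by apply: (mulfI (lt0r_neq0 (mulr_gt0 a_gt0 b_gt0))); rewrite mulr0; lra.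
have [La A2E] : L = a /\ A1 ^+ 2 + A2 ^+ 2 = e ^+ 2.
  by apply: focal_params => //; [lra | lra | rewrite -b2; lra].
by split => //; rewrite GE c1E c2E -La -A2E; ring.
Qed.
End Ellipse.

Section EllipseInSpace.
Variable R : realType.
Implicit Types (Z A : 'rV[R]_3) (S : set 'rV[R]_3).

(* x0 is only needed when e = 0, to choose an axis of the circle. *)
Lemma ellipse_axis Z (F1 F2 x0 : 'rV[R]_3) (a e : R) :
  0 < a -> 0 <= e -> dot Z F1 = 0 -> dot Z F2 = 0 -> enorm (F1 - F2) = 2 * a * e ->
  dot Z x0 = 0 -> enorm (x0 - F1) + enorm (x0 - F2) = 2 * a ->
  exists u, [/\ dot u u = 1, dot Z u = 0 & F1 - F2 = (2 * a * e) *: u].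
Proof.
move=> a_gt0 e_ge0 ZF1 ZF2 F12 Zx0 x0S; have a0 := lt0r_neq0 a_gt0.
have [e0|e_neq0] := eqVneq e 0.
  have F1F2 : F1 = F2.
    by apply/eqP; rewrite -subr_eq0 -dot_eq0 -enorm_sqr F12 e0 mulr0 expr0n.
  rewrite F1F2 subrr in x0S *.
  exists (a^-1 *: (x0 - F2)); split; last by rewrite e0 mulr0 scale0r.
    by rewrite dotZl dotZr -enorm_sqr (_ : enorm _ = a) ?mulVf ?mulrA //; [field | lra].
  by rewrite dotZr dotBr Zx0 ZF2 subrr mulr0.
exists ((2 * a * e)^-1 *: (F1 - F2)); split.
- by rewrite dotZl dotZr -enorm_sqr F12; field; rewrite e_neq0 a0.
- by rewrite dotZr dotBr ZF1 ZF2 subrr mulr0.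
- by rewrite scalerA mulfV ?scale1r // !mulf_neq0.
Qed.

Lemma ellipse_points Z S (a e : R) (x0 : 'rV[R]_3) :
  dot Z Z = 1 -> is_ellipse_in_plane Z S a e -> S x0 ->
  exists c u, [/\ dot u u = 1, dot Z u = 0, dot Z c = 0 &
    forall al be, -a <= al -> al <= a -> be ^+ 2 = (1 - e ^+ 2) * (a ^+ 2 - al ^+ 2) ->
      S (c + al *: u + be *: cross Z u)].
Proof.
move=> ZZ [a_gt0 [/andP[e_ge0 e_lt1] [F1 [F2 [ZF1 [ZF2 [F12 ->]]]]]]] [Zx0 x0S].
have [u [uu Zu F12u]] := ellipse_axis a_gt0 e_ge0 ZF1 ZF2 F12 Zx0 x0S.
set c := 2^-1 *: (F1 + F2); set w := cross Z u.
have ww : dot w w = 1 by rewrite dot_cross ZZ uu Zu expr0n subr0 mulr1.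
have uw : dot u w = 0 by rewrite dot_crossr.
have enorm_uw x y : enorm (x *: u + y *: w) = Num.sqrt (x ^+ 2 + y ^+ 2).
  by rewrite /enorm !(dotDl, dotDr, dotZl, dotZr) uu ww uw (dotC w u) uw; congr Num.sqrt; ring.
have F1E : F1 = c + (a * e) *: u.
  by apply/rowP => j; move/rowP/(_ j): F12u; rewrite /c !mxE; lra.
have F2E : F2 = c - (a * e) *: u.
  by apply/rowP => j; move/rowP/(_ j): F12u; rewrite /c !mxE; lra.
exists c, u; split => // [|al be al_ge al_le be2].
  by rewrite dotZr dotDr ZF1 ZF2 addr0 mulr0.
split; first by rewrite !(dotDr, dotZr) ZF1 ZF2 Zu dot_crossl; ring.
have -> : c + al *: u + be *: w - F1 = (al - a * e) *: u + be *: w.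
  by rewrite F1E; apply/rowP => j; rewrite !mxE; ring.
have -> : c + al *: u + be *: w - F2 = (al + a * e) *: u + be *: w.
  by rewrite F2E; apply/rowP => j; rewrite !mxE; ring.
rewrite !enorm_uw be2.
rewrite (_ : _ + _ = (a - e * al) ^+ 2); last by ring.
rewrite (_ : _ + _ = (a + e * al) ^+ 2); last by ring.
by rewrite !sqrtr_sqr !ger0_norm; [ring | nra | nra].
Qed.

Lemma ellipse_focal_equation Z A S (a e G : R) (x0 : 'rV[R]_3) :
  dot Z Z = 1 -> dot Z A = 0 -> is_ellipse_in_plane Z S a e -> S x0 ->
  (forall x, S x -> enorm x = G - dot A x) ->
  G = a * (1 - e ^+ 2) /\ dot A A = e ^+ 2.
Proof.
move=> ZZ ZA ell Sx0 focal; have [a_gt0 [e01 _]] := ell.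
have [c [u [uu Zu Zc onS]]] := ellipse_points ZZ ell Sx0.
set w := cross Z u in onS *.
have plane := dot_plane ZZ uu Zu; rewrite -/w in plane.
have ww : dot w w = 1 by rewrite dot_cross ZZ uu Zu expr0n subr0 mulr1.
have uw : dot u w = 0 by rewrite dot_crossr.
have [-> AA] : G = a * (1 - e ^+ 2) /\ dot A u ^+ 2 + dot A w ^+ 2 = e ^+ 2.
  apply: (ellipse_focal_coeffs (c1 := dot c u) (c2 := dot c w)) => // al be al_ge al_le be2.
  have Sx := onS al be al_ge al_le be2; set x := c + _ + _ in Sx.
  have Zx : dot Z x = 0 by rewrite !(dotDr, dotZr) Zc Zu dot_crossl !mulr0 !addr0.
  have xu : dot x u = dot c u + al by rewrite !(dotDl, dotZl) uu (dotC w u) uw; ring.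
  have xw : dot x w = dot c w + be by rewrite !(dotDl, dotZl) uw ww; ring.
  rewrite -xu -xw !expr2 -(plane _ _ Zx Zx) -/(enorm x) focal //.
  by rewrite (plane _ _ ZA Zx); ring.
by split => //; rewrite (plane _ _ ZA ZA) -AA; ring.
Qed.
End EllipseInSpace.

Section SphericalKepler.
Variable R : realType.
Variables (Z : 'rV[R]_3) (Rad : R) (q : R -> 'rV[R]_3) (lam : R -> R).
Hypothesis ZZ : dot Z Z = 1.
Hypothesis Rad_gt0 : 0 < Rad.
Hypothesis q_sphere : forall t, dot (q t) (q t) = Rad ^+ 2.
Hypothesis h_gt0 : forall t, 0 < hgt Rad Z (q t).
Hypothesis q_neqO : forall t, q t != Rad *: Z.
Hypothesis q_der : forall t, derivable q t 1.
Hypothesis v_der : forall t, derivable (derive1 q) t 1.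
Hypothesis q_eq : forall t,
  derive1 (derive1 q) t = bfun Rad Z (q t) *: ZB Rad Z (q t) + lam t *: q t.

Let h (t : R) := hgt Rad Z (q t).
Let v := derive1 q.
Let dh (t : R) := dot Z (v t) / Rad.
Let Q (t : R) := Qproj Rad Z (q t).
(* the velocity dQ/dtau of the central projection *)
Let V (t : R) := h t *: v t - dh t *: q t.

Let Rad_neq0 : Rad != 0. Proof. exact: lt0r_neq0 Rad_gt0. Qed.
Let h_neq0 (t : R) : h t != 0. Proof. exact: lt0r_neq0 (h_gt0 t). Qed.
Let dot_Z_q (t : R) : dot Z (q t) = h t * Rad. Proof. by rewrite divfK. Qed.

Lemma is_derive_q (t : R) : is_derive t 1 q (v t).
Proof. by rewrite /v derive1E; apply: derivableP. Qed.

Lemma is_derive_v (t : R) :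
  is_derive t 1 v (bfun Rad Z (q t) *: ZB Rad Z (q t) + lam t *: q t).
Proof. by rewrite -q_eq derive1E; apply: derivableP. Qed.

Lemma dot_q_v (t : R) : dot (q t) (v t) = 0.
Proof.
have := is_derive_dot (is_derive_q t) (is_derive_q t).
have -> : (fun x => dot (q x) (q x)) = cst (Rad ^+ 2) by apply/funext => x; rewrite q_sphere.
by case=> _; rewrite derive_cst (dotC (v t)) => /esym/eqP; rewrite -mulr2n mulrn_eq0 => /eqP.
Qed.

Lemma h_lt1 (t : R) : h t < 1.
Proof.
have : 0 < dot (q t - Rad *: Z) (q t - Rad *: Z) by rewrite dot_gt0 subr_eq0 q_neqO.
rewrite !(dotBl, dotBr, dotZl, dotZr) q_sphere ZZ (dotC (q t) Z) => pos.
have : 0 < (2 * Rad) * (Rad - dot Z (q t)) by lra.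
by rewrite pmulr_rgt0 ?mulr_gt0 // subr_gt0 => Zq; rewrite /h /hgt ltr_pdivrMr // mul1r.
Qed.

Let one_sub_h2_gt0 (t : R) : 0 < 1 - h t ^+ 2.
Proof. by have := h_gt0 t; have := h_lt1 t; rewrite -/(h t); nra. Qed.

Let sqrt_one_sub_h2_neq0 (t : R) : Num.sqrt (1 - h t ^+ 2) != 0.
Proof. by rewrite sqrtr_eq0 -ltNge one_sub_h2_gt0. Qed.

Lemma enorm_Q (t : R) : enorm (Q t) = Rad * Num.sqrt (1 - h t ^+ 2) / h t.
Proof.
have r_gt0 : 0 < Rad * Num.sqrt (1 - h t ^+ 2) / h t.
  by apply: divr_gt0 (h_gt0 t); rewrite mulr_gt0 // sqrtr_gt0 one_sub_h2_gt0.
rewrite -[RHS]ger0_norm ?ltW // -sqrtr_sqr /enorm; congr Num.sqrt.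
rewrite /Q /Qproj !(dotBl, dotBr, dotZl, dotZr) q_sphere ZZ (dotC (q t)) dot_Z_q.
rewrite expr_div_n exprMn sqr_sqrtr ?ltW //.
by rewrite -/(h t); field; rewrite ?Rad_neq0 ?h_neq0.
Qed.

Lemma Q_neq0 (t : R) : Q t != 0.
Proof.
rewrite -enorm_gt0 enorm_Q; apply: divr_gt0 (h_gt0 t).
by rewrite mulr_gt0 // sqrtr_gt0 one_sub_h2_gt0.
Qed.

Lemma dot_Z_Q (t : R) : dot Z (Q t) = 0.
Proof. by rewrite /Q /Qproj dotBr !dotZr ZZ dot_Z_q -/(h t); field. Qed.

Lemma dot_Z_V (t : R) : dot Z (V t) = 0.
Proof. by rewrite /V /dh dotBr !dotZr dot_Z_q; field. Qed.

Lemma is_derive_h (t : R) : is_derive t 1 h (dh t).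
Proof.
apply: is_derive_eq
  (is_derive_mul (is_derive_dotl Z (is_derive_q t)) (is_derive_cst Rad^-1 t 1)) _.
by rewrite mulr0 add0r mulrC.
Qed.

Lemma is_derive_dh (t : R) :
  is_derive t 1 dh (dot Z (bfun Rad Z (q t) *: ZB Rad Z (q t) + lam t *: q t) / Rad).
Proof.
apply: is_derive_eq
  (is_derive_mul (is_derive_dotl Z (is_derive_v t)) (is_derive_cst Rad^-1 t 1)) _.
by rewrite mulr0 add0r mulrC.
Qed.

Lemma is_derive_Q (t : R) : is_derive t 1 Q ((h t ^+ 2)^-1 *: V t).
Proof.
apply: is_derive_eq (is_derive_sub (is_derive_scale
  (is_derive_inv (is_derive_h t) (h_neq0 t)) (is_derive_q t)) (is_derive_cst (Rad *: Z) t 1)) _.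
by apply/rowP => j; rewrite !mxE; field.
Qed.

Lemma is_derive_V (t : R) : is_derive t 1 V ((h t ^+ 2)^-1 *: kepler_accel (Q t)).
Proof.
apply: is_derive_eq (is_derive_sub (is_derive_scale (is_derive_h t) (is_derive_v t))
  (is_derive_scale (is_derive_dh t) (is_derive_q t))) _.
rewrite /kepler_accel enorm_Q /Q /Qproj /bfun /ZB -/(h t).
rewrite !(dotDr, dotNr, dotZr) ZZ dot_Z_q.
by apply/rowP => j; rewrite !mxE; field; rewrite h_neq0 sqrt_one_sub_h2_neq0 Rad_neq0.
Qed.

Lemma energy_split (t : R) : energy Rad Z (q t) (v t)
  = kepler_energy (Q t) (V t) + angmom2 (Q t) (V t) / (2 * Rad ^+ 2).
Proof.
rewrite /energy /Upot /kepler_energy /angmom2 enorm_Q /Q /Qproj /V /dh -/(h t).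
rewrite !(dotBl, dotBr, dotZl, dotZr) q_sphere ZZ (dotC (v t) (q t)) dot_q_v.
rewrite (dotC (q t) Z) dot_Z_q.
by field; rewrite h_neq0 sqrt_one_sub_h2_neq0 Rad_neq0.
Qed.

Lemma spherical_kepler_reparam (tau : R -> R) (P : R -> 'rV[R]_3) :
  (forall t, derivable tau t 1 /\ derive1 tau t = (hgt Rad Z (q t) ^+ 2)^-1) ->
  (forall t, P (tau t) = Q t) ->
  forall t, derivable P (tau t) 1 /\ derivable (derive1 P) (tau t) 1 /\
    derive1 (derive1 P) (tau t) = kepler_accel (P (tau t)).
Proof.
move=> tau_der PQ.
have dtau (t : R) : is_derive t 1 tau (h t ^+ 2)^-1.
  by have [/derivableP + tau'] := tau_der t; rewrite /h -tau' derive1E.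
have k_gt0 (t : R) : 0 < (h t ^+ 2)^-1 by rewrite invr_gt0 exprn_gt0 ?h_gt0.
have dP := is_derive_reparam dtau k_gt0 PQ is_derive_Q.
have dP' (t : R) : derive1 P (tau t) = V t by rewrite derive1E; have [_ ->] := dP t.
have ddP := is_derive_reparam dtau k_gt0 dP' is_derive_V.
move=> t; have [dPt _] := dP t; have [ddPt ddPv] := ddP t.
by split; [|split]; rewrite // derive1E ddPv PQ.
Qed.

Lemma spherical_kepler_energy (a e : R) : is_ellipse_in_plane Z (range Q) a e ->
  forall t, energy Rad Z (q t) (v t) = - (2 * a)^-1 + a * (1 - e ^+ 2) / (2 * Rad ^+ 2).
Proof.
move=> ell t; have [a_gt0 [/andP[e_ge0 e_lt1] _]] := ell.
have A_const := runge_lenz_const Q_neq0 is_derive_Q is_derive_V.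
have G_const := angmom2_const Q_neq0 is_derive_Q is_derive_V.
pose A := runge_lenz (Q 0) (V 0); pose G := angmom2 (Q 0) (V 0).
have focal x : range Q x -> enorm x = G - dot A x.
  case=> s _ <-; rewrite /A /G (A_const 0 s) (G_const 0 s).
  by rewrite dot_runge_lenz ?Q_neq0 //; ring.
have ZA : dot Z A = 0 by rewrite /A /runge_lenz dotBr !dotZr dot_Z_Q dot_Z_V !mulr0 subrr.
have Q0 : range Q (Q 0) by exists 0.
have [GE AA] := ellipse_focal_equation ZZ ZA ell Q0 focal.
have EK : kepler_energy (Q t) (V t) = - (2 * a)^-1.
  have := runge_lenz_norm (V t) (Q_neq0 t).
  rewrite (A_const t 0) (G_const t 0) -/A -/G AA GE => norm.
  have e2_neq0 : 1 - e ^+ 2 != 0 by apply: lt0r_neq0; rewrite subr_gt0; nra.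
  apply: (mulfI (mulf_neq0 e2_neq0 (lt0r_neq0 a_gt0))).
  rewrite [RHS](_ : _ = (e ^+ 2 - 1) / 2); first lra.
  by field; rewrite lt0r_neq0.
by rewrite energy_split EK (G_const t 0) -/G GE.
Qed.
End SphericalKepler.

Theorem mainTheorem1 (R : realType) (Z : 'rV[R]_3) (Rad : R)
  (q : R -> 'rV[R]_3) (lam : R -> R) (a e : R) :
  dot Z Z = 1 ->
  0 < Rad ->
  (* q moves on the sphere B, in the open hemisphere h > 0, avoiding O = RZ *)
  (forall t, dot (q t) (q t) = Rad ^+ 2) ->
  (forall t, 0 < hgt Rad Z (q t)) ->
  (forall t, q t != Rad *: Z) ->
  (* spherical Kepler problem: qddot = b(q) Z_B + lambda q *)
  (forall t, derivable q t 1) ->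
  (forall t, derivable (derive1 q) t 1) ->
  (forall t, derive1 (derive1 q) t
             = bfun Rad Z (q t) *: ZB Rad Z (q t) + lam t *: q t) ->
  (* the orbit of Q = q/h - RZ is an ellipse with semi-major axis a and
     eccentricity e *)
  is_ellipse_in_plane Z (range (fun t => Qproj Rad Z (q t))) a e ->
  (* Q, reparametrized by tau with dtau = h^{-2} dt, solves Kepler's equation *)
  (forall (tau : R -> R) (P : R -> 'rV[R]_3),
     (forall t, derivable tau t 1 /\ derive1 tau t = (hgt Rad Z (q t) ^+ 2)^-1) ->
     (forall t, P (tau t) = Qproj Rad Z (q t)) ->
     forall t, derivable P (tau t) 1 /\ derivable (derive1 P) (tau t) 1 /\
       derive1 (derive1 P) (tau t) = - (enorm (P (tau t)) ^+ 3)^-1 *: P (tau t))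
  /\
  (* energy formula *)
  (forall t, energy Rad Z (q t) (derive1 q t)
             = - (2 * a)^-1 + a * (1 - e ^+ 2) / (2 * Rad ^+ 2)).
Proof.
move=> ZZ Rad_gt0 q_sphere h_gt0 q_neqO q_der v_der q_eq ell; split.
- exact: spherical_kepler_reparam.
- exact: spherical_kepler_energy.
Qed.
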